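(* Let $G$ be a graph, $\mathscr{C}$ a skew graph category and $F=\{(K,g_{\mathbf{a}}^{-1}g_{\mathbf{b}})\mid(K,\mathbf{a},\mathbf{b})\in\mathscr{C}\}$ the corresponding graph fibration. Let $K$ be the greatest subgraph of $G$ contained in $F$, i.e. a subgraph $K\subset G$ with $F(K)\ne\emptyset$ such that every subgraph $H\subset G$ with $F(H)\neq\emptyset$ satisfies $H\subset K$. Then for all $k,l\in\mathbb{N}_0$ the vector space $\mathscr{C}^G(k,l)$ has the linear basis $\{\hat T^G_{(K,\mathbf{a},\mathbf{b})}\mid[\mathbf{a},\mathbf{b}]\in W^{\mathscr{C}}_K(k,l)\}$.
   Context: Graphs are finite, undirected, without multiple edges, loops allowed, up to isomorphism; $N_k$ is the edgeless graph on $k$ vertices; graph homomorphisms map edges (including loops) to edges; $H\subset G$ means $H$ is (isomorphic to) a subgraph of $G$. $\mathbb{Z}_2^{*V}$ is the group generated by the set $V$ subject to $v^2=e$; $g_{\mathbf{a}}$ is the product of the entries of a tuple $\mathbf{a}$. A vertex overlap of graphs $K,H$ is a subset $f\subset V(K)\times V(H)$ in which each vertex occurs at most once; $K\cup_fH$ is the quotient of $K\sqcup H$ identifying $v$ with $w$ for $(v,w)\in f$, with induced maps $f_K,f_H$. Bilabelled graph: $(K,\mathbf{a},\mathbf{b})$, $\mathbf{a}\in V(K)^k$, $\mathbf{b}\in V(K)^l$, up to isomorphism preserving tuples; $\mathscr{C}(k,l)$ those in $\mathscr{C}$ with $k$ inputs, $l$ outputs. Operations: $f$-union $(K,\mathbf{a},\mathbf{b})\cup_f(H,\mathbf{c},\mathbf{d})=(K\cup_fH,f_K(\mathbf{a})f_H(\mathbf{c}),f_K(\mathbf{b})f_H(\mathbf{d}))$;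 composition (for $|\mathbf{b}|=|\mathbf{c}|$) $(H,\mathbf{c},\mathbf{d})\cdot(K,\mathbf{a},\mathbf{b})=(H\cdot K,\mathbf{a},\mathbf{d})$ with $H\cdot K$ the quotient of $K\sqcup H$ identifying $b_i$ with $c_i$; involution swaps the tuples. $\ker\mathbf{b}$ is the partition of positions by equal entries. A skew graph category is a set of bilabelled graphs containing $(N_0,\emptyset,\emptyset)$, $(M,(v),(v))$, $(M,\emptyset,(v,v))$ ($M$ the one-vertex loopless graph), closed under all $f$-unions, under compositions $\mathbf{H}\cdot\mathbf{K}$ with $\mathbf{K}=(K,\mathbf{a},\mathbf{b}),\mathbf{H}=(H,\mathbf{c},\mathbf{d})$, $\ker\mathbf{b}=\ker\mathbf{c}$, and under involution. For a set $F$ of pairs $(K,a)$ (up to isomorphism), $F(K):=\{a\mid(K,a)\in F\}$. With the vertices of $G$ labelled $1,\dots,n$, $\hat T^G_{(K,\mathbf{a},\mathbf{b})}\colon(\mathbb{C}^n)^{\otimes k}\to(\mathbb{C}^n)^{\otimes l}$ has entries $\#\{\phi\colon K\to G\text{ injective homomorphism}\mid\phi(\mathbf{a})=\mathbf{i},\phi(\mathbf{b})=\mathbf{j}\}$ at position $(\mathbf{j},\mathbf{i})$, and $\mathscr{C}^G(k,l):=\mathrm{span}\{\hat T^G_{\mathbf{H}}\mid\mathbf{H}\in\mathscr{C}(k,l)\}$. $W_K(k,l):=(V(K)^k\times V(K)^l)/\mathrm{Aut}\,K$, with classes $[\mathbf{a},\mathbf{b}]$; $W^{\mathscr{C}}_K(k,l):=\{[\mathbf{a},\mathbf{b}]\in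 W_K(k,l)\mid(K,\mathbf{a},\mathbf{b})\in\mathscr{C}(k,l)\}$ ($\hat T^G_{(K,\mathbf{a},\mathbf{b})}$ depends only on the class). *)

From mathcomp Require Import all_boot all_algebra all_field.
Set Implicit Arguments. Unset Strict Implicit. Unset Printing Implicit Defensive.
Import GRing.Theory.

(* Finite undirected graphs, loops allowed, no multiple edges.               *)
Record graph := Graph {
  gn : nat;
  gadj : rel 'I_gn;
  gsym : symmetric gadj }.

(* H \subset G (up to isomorphism): H is isomorphic to a subgraph of G,
   i.e. there is an injective homomorphism H -> G. *)
Definition subgraph (H G : graph) : Prop :=
  exists h : 'I_(gn H) -> 'I_(gn G),
    injective h /\ (forall x y, gadj x y -> gadj (h x) (h y)).

Definition empty_rel (n : nat) : rel 'I_n := fun _ _ => false.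
Lemma empty_rel_sym n : symmetric (@empty_rel n). Proof. by []. Qed.
Definition N0 : graph := Graph (@empty_rel_sym 0).
Definition Mgraph : graph := Graph (@empty_rel_sym 1).
Definition vM : 'I_(gn Mgraph) := ord0.

Record bgraph := BG {
  bgr : graph;
  bin : seq 'I_(gn bgr);
  bout : seq 'I_(gn bgr) }.

Definition biso (X Y : bgraph) : Prop :=
  exists h : 'I_(gn (bgr X)) -> 'I_(gn (bgr Y)),
    bijective h /\ (forall x y, gadj x y = gadj (h x) (h y)) /\
    map h (bin X) = bin Y /\ map h (bout X) = bout Y.

Definition overlap (m p : nat) (f : 'I_m -> 'I_p -> bool) : Prop :=
  (forall v w w', f v w -> f v w' -> w = w') /\
  (forall v v' w, f v w -> f v' w -> v = v').

(* [glue K H f G fK fH]: G, with the maps fK : V(K) -> V(G), fH : V(H) -> V(G),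
   is (a representative of the isomorphism class of) the quotient K \cup_f H
   of the disjoint union K \sqcup H identifying v with w for f v w, the maps
   fK, fH being the induced ones.  (For a vertex overlap f the quotient map is
   injective on K and on H, jointly surjective, identifies exactly the pairs
   in f, and the edges of the quotient are the images of the edges.) *)
Definition glue (K H G : graph) (f : 'I_(gn K) -> 'I_(gn H) -> bool)
    (fK : 'I_(gn K) -> 'I_(gn G)) (fH : 'I_(gn H) -> 'I_(gn G)) : Prop :=
  [/\ injective fK, injective fH,
      (forall z, (exists v, fK v = z) \/ (exists w, fH w = z)),
      (forall v w, fK v = fH w <-> f v w) &
      (forall x y, gadj x y <->
         (exists v v', [/\ fK v = x, fK v' = y & gadj v v']) \/
         (exists w w', [/\ fH w = x, fH w' = y & gadj w w']))].

Definition ker_eq (m p : nat) (b : seq 'I_m) (c : seq 'I_p) : Prop :=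
  size b = size c /\
  {in zip b c &, forall u u' : 'I_m * 'I_p, (u.1 == u'.1) = (u.2 == u'.2)}.

Definition comp_rel (m p : nat) (b : seq 'I_m) (c : seq 'I_p) :
    'I_m -> 'I_p -> bool := fun v w => (v, w) \in zip b c.

Definition iso_closed (C : bgraph -> Prop) : Prop :=
  forall X Y, biso X Y -> C X -> C Y.

Record skew_graph_category (C : bgraph -> Prop) : Prop := {
  sgc_iso : iso_closed C;
  sgc_N0 : C (@BG N0 [::] [::]);
  sgc_M1 : C (@BG Mgraph [:: vM] [:: vM]);
  sgc_M2 : C (@BG Mgraph [::] [:: vM; vM]);
  sgc_union : forall (X Y : bgraph) (G : graph) f fK fH,
      C X -> C Y -> overlap f -> @glue (bgr X) (bgr Y) G f fK fH ->
      C (@BG G (map fK (bin X) ++ map fH (bin Y))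
               (map fK (bout X) ++ map fH (bout Y)));
  sgc_comp : forall (X Y : bgraph) (G : graph) fK fH,
      C X -> C Y -> ker_eq (bout X) (bin Y) ->
      @glue (bgr X) (bgr Y) G (comp_rel (bout X) (bin Y)) fK fH ->
      C (@BG G (map fK (bin X)) (map fH (bout Y)));
  sgc_inv : forall X, C X -> C (@BG (bgr X) (bout X) (bin X)) }.

Definition Ckl (C : bgraph -> Prop) (k l : nat) (X : bgraph) : Prop :=
  [/\ C X, size (bin X) = k & size (bout X) = l].

(* Elements of Z_2^{*V} are represented by reduced words (no two equal       *)
(* adjacent letters); [reduce] computes the reduced word of a product.       *)
Definition red_cons (T : eqType) (x : T) (w : seq T) : seq T :=
  if w is y :: w' then (if x == y then w' else x :: w) else [:: x].
Definition reduce (T : eqType) (s : seq T) : seq T := foldr (@red_cons T) [::] s.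

(* g_a^{-1} g_b = a_k ... a_1 b_1 ... b_l  (each generator is an involution) *)
Definition gab (T : eqType) (a b : seq T) : seq T := reduce (rev a ++ b).

Definition fib (C : bgraph -> Prop) (K : graph) (g : seq 'I_(gn K)) : Prop :=
  exists a b : seq 'I_(gn K), C (@BG K a b) /\ g = gab a b.

Definition fib_nonempty (C : bgraph -> Prop) (K : graph) : Prop :=
  exists g, @fib C K g.

(* The maps \hat T^G_(K,a,b) : (C^n)^{\otimes k} -> (C^n)^{\otimes l},        *)
(* as arrays indexed by (j, i) with j an l-tuple and i a k-tuple of vertices. *)
Definition tens (n k l : nat) := {ffun l.-tuple 'I_n * k.-tuple 'I_n -> algC^o}.

Definition inj_homs (K G : graph) : {set {ffun 'I_(gn K) -> 'I_(gn G)}} :=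
  [set phi : {ffun 'I_(gn K) -> 'I_(gn G)} | injectiveb phi &&
             [forall x, forall y, gadj x y ==> gadj (phi x) (phi y)]].

Definition That (G : graph) (k l : nat) (X : bgraph) : tens (gn G) k l :=
  [ffun ji => ((#|[set phi in inj_homs (bgr X) G |
                  (map phi (bin X) == val ji.2) &&
                  (map phi (bout X) == val ji.1)]|)%:R)%R].

Local Open Scope ring_scope.

Definition lin_span (R : pzRingType) (V : lmodType R) (P : V -> Prop) (v : V)
  : Prop :=
  exists (m : nat) (vs : 'I_m -> V) (c : 'I_m -> R),
    (forall i, P (vs i)) /\ v = \sum_(i < m) c i *: vs i.

Definition lin_indep (R : pzRingType) (V : lmodType R) (P : V -> Prop) : Prop :=
  forall (m : nat) (vs : 'I_m -> V) (c : 'I_m -> R),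
    injective vs -> (forall i, P (vs i)) ->
    \sum_(i < m) c i *: vs i = 0 -> forall i, c i = 0.

Definition is_basis_of (R : pzRingType) (V : lmodType R) (S P : V -> Prop)
  : Prop :=
  (forall v, S v <-> lin_span P v) /\ lin_indep P.

Definition CG (C : bgraph -> Prop) (G : graph) (k l : nat) : tens (gn G) k l -> Prop :=
  lin_span (fun v => exists X, Ckl C k l X /\ v = That G k l X).

(* {\hat T^G_(K,a,b) | [a,b] \in W^C_K(k,l)}; since \hat T^G_(K,a,b) depends
   only on the Aut K-class [a,b], this is the set of \hat T^G_(K,a,b) over
   representatives (a,b) with (K,a,b) \in C(k,l). *)
Definition WT (C : bgraph -> Prop) (G K : graph) (k l : nat)
  : tens (gn G) k l -> Prop :=
  fun v => exists a b : seq 'I_(gn K),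
    Ckl C k l (@BG K a b) /\ v = That G k l (@BG K a b).

Arguments CG C G k l : clear implicits.
Arguments WT C G K k l : clear implicits.

(* Fix an injective homomorphism psi0 : K -> G.  For (H,c,d) in C and injective
   homomorphisms phi : H -> G, psi : K -> G, the f-union of (H,c,d) with a member of C
   on K along {(v,w) | phi v = psi w} is the subgraph phi(H) \cup psi(K) of G; it lies in
   F, so by maximality it embeds into K, and comparing numbers of vertices and edges
   psi(K) is all of it: phi = psi \o tau for an injective homomorphism tau : H -> K.
   Double counting the pairs (tau, psi) gives N T^G_(H,c,d) = sum_tau T^G_(K, tau c, tau d),
   with N > 0 the number of injective homomorphisms K -> G, and (K, tau c, tau d) is in C
   as the union of (H,c,d) with (K,[],[]), which is in C because the labels of any member
   of C on K can be capped off.  For independence, T^G_(K,a',b') is nonzero at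
   (psi0 b, psi0 a) only if psi0 \o sigma maps (a',b') to (psi0 a, psi0 b) for an injective
   endomorphism sigma of K, i.e. an automorphism, so then [a',b'] = [a,b]. *)

From mathcomp Require Import all_boot all_algebra all_field.
Set Implicit Arguments. Unset Strict Implicit. Unset Printing Implicit Defensive.
Import GRing.Theory Num.Theory.

Definition graph_hom (A B : graph) (h : 'I_(gn A) -> 'I_(gn B)) : Prop :=
  forall x y, gadj x y -> gadj (h x) (h y).

Definition edgeless (n : nat) : graph := Graph (@empty_rel_sym n).

Lemma hom_edgeless n (B : graph) (h : 'I_n -> 'I_(gn B)) : @graph_hom (edgeless n) B h.
Proof. by []. Qed.

Lemma inj_Mgraph (T : Type) (h : 'I_(gn Mgraph) -> T) : injective h.
Proof. by move=> v v' _; rewrite (ord1 v) (ord1 v'). Qed.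

Definition image_adj (A : graph) (n : nat) (h : 'I_(gn A) -> 'I_n) : rel 'I_n :=
  fun z z' => [exists u, exists u', [&& h u == z, h u' == z' & gadj u u']].

Lemma image_adjP (A : graph) n (h : 'I_(gn A) -> 'I_n) z z' :
  reflect (exists u u', [/\ h u = z, h u' = z' & gadj u u']) (image_adj h z z').
Proof.
apply: (iffP existsP) => [[u /existsP [u' /and3P [/eqP ? /eqP ? e]]] | [u [u' [? ? e]]]].
  by exists u, u'.
by exists u; apply/existsP; exists u'; apply/and3P; split=> //; apply/eqP.
Qed.

Lemma image_adj_sym (A : graph) n (h : 'I_(gn A) -> 'I_n) : symmetric (image_adj h).
Proof.
suff imp z z' : image_adj h z z' -> image_adj h z' z by move=> z z'; apply/idP/idP; apply: imp.
by move=> /image_adjP [u [u' [? ? e]]]; apply/image_adjP; exists u', u; rewrite gsym.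
Qed.

Lemma image_adj_id (A : graph) : image_adj (@id 'I_(gn A)) =2 @gadj A.
Proof.
by move=> x y; apply/image_adjP/idP => [[u [u' [<- <-]]] // | e]; exists x, y.
Qed.

Lemma image_adj_hom (A B : graph) (h : 'I_(gn A) -> 'I_(gn B)) x y :
  graph_hom h -> image_adj h x y -> gadj x y.
Proof. by move=> hh /image_adjP [u [u' [<- <- /hh]]]. Qed.

Lemma image_adj_enum (A : graph) n m (h : 'I_(gn A) -> 'I_n) (g : 'I_m -> 'I_n)
    (h' : 'I_(gn A) -> 'I_m) :
  injective g -> (forall u, g (h' u) = h u) ->
  forall x y, image_adj h (g x) (g y) = image_adj h' x y.
Proof.
move=> ig hg x y; apply/image_adjP/image_adjP => [[u [u' [e1 e2 e]]] | [u [u' [<- <- e]]]].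
  by exists u, u'; split => //; apply: ig; rewrite hg.
by exists u, u'; rewrite !hg.
Qed.

Lemma glueP (K H G : graph) (f : 'I_(gn K) -> 'I_(gn H) -> bool)
    (fK : 'I_(gn K) -> 'I_(gn G)) (fH : 'I_(gn H) -> 'I_(gn G)) :
  injective fK -> injective fH ->
  (forall z, (exists v, fK v = z) \/ (exists w, fH w = z)) ->
  (forall v w, fK v = fH w <-> f v w) ->
  (forall x y, gadj x y = image_adj fK x y || image_adj fH x y) ->
  @glue K H G f fK fH.
Proof.
move=> iK iH onto eqv adj; split=> // x y.
rewrite adj; split; first by case/orP => /image_adjP; [left | right].
by case=> /image_adjP ->; rewrite ?orbT.
Qed.

Lemma glue_into_r (K H : graph) (f : 'I_(gn K) -> 'I_(gn H) -> bool)
    (h : 'I_(gn K) -> 'I_(gn H)) :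
  injective h -> graph_hom h -> (forall v w, f v w = (h v == w)) -> @glue K H H f h id.
Proof.
move=> ih hh hf; apply: glueP => //.
- by move=> z; right; exists z.
- by move=> v w; rewrite hf; split => [->|/eqP].
- move=> x y; rewrite image_adj_id.
  by case: (boolP (image_adj h x y)) => // /(image_adj_hom hh) ->.
Qed.

Lemma glue_into_l (K H : graph) (f : 'I_(gn K) -> 'I_(gn H) -> bool)
    (h : 'I_(gn H) -> 'I_(gn K)) :
  injective h -> graph_hom h -> (forall v w, f v w = (v == h w)) -> @glue K H K f id h.
Proof.
move=> ih hh hf; apply: glueP => //.
- by move=> z; left; exists z.
- by move=> v w; rewrite hf; split => [->|/eqP].
- move=> x y; rewrite image_adj_id.
  by case: (boolP (image_adj h x y)) => [/(image_adj_hom hh) ->|]; rewrite ?orbF.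
Qed.

Lemma mem_zip_mapr (T U : eqType) (h : T -> U) (s : seq T) v w :
  ((v, w) \in zip s (map h s)) = (v \in s) && (w == h v).
Proof.
elim: s => //= x s IH; rewrite !inE IH xpair_eqE.
by case: (eqVneq v x) => [->|] //=; rewrite orb_idr // => /andP [].
Qed.

Lemma mem_zip_mapl (T U : eqType) (h : T -> U) (s : seq T) v w :
  ((v, w) \in zip (map h s) s) = (w \in s) && (v == h w).
Proof.
elim: s => //= x s IH; rewrite !inE IH xpair_eqE andbC.
by case: (eqVneq w x) => [->|] //=; rewrite orb_idr // => /andP [].
Qed.

Fixpoint ord_twice (m : nat) : seq 'I_m :=
  if m is m'.+1 then map (lift ord_max) (ord_twice m') ++ [:: ord_max; ord_max]
  else [::].

Lemma mem_ord_twice m (v : 'I_m) : v \in ord_twice m.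
Proof.
elim: m v => [[] //|m IH] v; rewrite /= mem_cat.
case: (unliftP ord_max v) => [j ->|->]; last by rewrite mem_head orbT.
by rewrite mem_map ?IH //; apply: lift_inj.
Qed.

Section SkewGraphCategory.

Variable C : bgraph -> Prop.
Hypothesis hC : skew_graph_category C.

Lemma union_into_r (X Y : bgraph) (h : 'I_(gn (bgr X)) -> 'I_(gn (bgr Y))) :
  injective h -> graph_hom h -> C X -> C Y ->
  C (BG (map h (bin X) ++ bin Y) (map h (bout X) ++ bout Y)).
Proof.
move=> ih hh hX hY.
have ov : overlap (fun v w => h v == w).
  by split=> [v w w' /eqP <- /eqP | v v' w /eqP <- /eqP /ih].
have := sgc_union hC hX hY ov (glue_into_r ih hh (fun _ _ => erefl)).
by rewrite !map_id.
Qed.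

Lemma union_into_l (X Y : bgraph) (h : 'I_(gn (bgr Y)) -> 'I_(gn (bgr X))) :
  injective h -> graph_hom h -> C X -> C Y ->
  C (BG (bin X ++ map h (bin Y)) (bout X ++ map h (bout Y))).
Proof.
move=> ih hh hX hY.
have ov : overlap (fun v w => v == h w).
  by split=> [v w w' /eqP -> /eqP /ih | v v' w /eqP -> /eqP].
have := sgc_union hC hX hY ov (glue_into_l ih hh (fun _ _ => erefl)).
by rewrite !map_id.
Qed.

Lemma comp_onto (X Y : bgraph) (h : 'I_(gn (bgr X)) -> 'I_(gn (bgr Y))) :
  injective h -> graph_hom h -> C X -> C Y ->
  map h (bout X) = bin Y -> (forall v, v \in bout X) ->
  C (BG (map h (bin X)) (bout Y)).
Proof.
move=> ih hh hX hY hXY cov.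
have ker : ker_eq (bout X) (bin Y).
  split=> [|[v w] [v' w']]; first by rewrite -hXY size_map.
  by rewrite -hXY !mem_zip_mapr => /andP [_ /eqP ->] /andP [_ /eqP ->]; rewrite (inj_eq ih).
have gl : @glue _ _ (bgr Y) (comp_rel (bout X) (bin Y)) h id.
  by apply: glue_into_r => // v w; rewrite /comp_rel -hXY mem_zip_mapr cov eq_sym.
by have := sgc_comp hC hX hY ker gl; rewrite map_id.
Qed.

Lemma comp_into (X Y : bgraph) (h : 'I_(gn (bgr Y)) -> 'I_(gn (bgr X))) :
  injective h -> graph_hom h -> C X -> C Y ->
  map h (bin Y) = bout X -> (forall v, v \in bin Y) ->
  C (BG (bin X) (map h (bout Y))).
Proof.
move=> ih hh hX hY hXY cov.
have ker : ker_eq (bout X) (bin Y).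
  split=> [|[v w] [v' w']]; first by rewrite -hXY size_map.
  by rewrite -hXY !mem_zip_mapl => /andP [_ /eqP ->] /andP [_ /eqP ->]; rewrite (inj_eq ih).
have gl : @glue _ _ (bgr X) (comp_rel (bout X) (bin Y)) id h.
  by apply: glue_into_l => // v w; rewrite /comp_rel -hXY mem_zip_mapl cov.
by have := sgc_comp hC hX hY ker gl; rewrite map_id.
Qed.

Lemma cups_edgeless m : C (@BG (edgeless m) [::] (ord_twice m)).
Proof.
elim: m => [|m IH]; first exact: sgc_N0 hC.
have ov : overlap (fun (v : 'I_m) (w : 'I_1) => false) by [].
have gl : @glue (edgeless m) Mgraph (edgeless m.+1)
    (fun _ _ => false) (lift ord_max) (fun _ => ord_max).
  apply: glueP => //; [exact: lift_inj | exact: inj_Mgraph | | | ].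
  - by move=> z; case: (unliftP ord_max z) => [j ->|->]; [left; exists j | right; exists vM].
  - by move=> v w; split => // /eqP; rewrite eq_sym (negbTE (neq_lift _ _)).
  - by move=> x y; apply/esym/norP; split; apply/image_adjP => [[u [u' []]]].
exact: (sgc_union hC IH (sgc_M2 hC) ov gl).
Qed.

Lemma union_vertex (Z : graph) (x : 'I_(gn Z)) (p q : seq 'I_(gn Mgraph)) s t :
  C (BG p q) -> C (BG s t) ->
  C (BG (map (fun=> x) p ++ s) (map (fun=> x) q ++ t)).
Proof.
exact: (union_into_r (X := BG p q) (Y := BG s t) (h := fun=> x)
  (@inj_Mgraph _ _) (@hom_edgeless 1 _ _)).
Qed.

Lemma strand_cons (Z : graph) (x : 'I_(gn Z)) s t :
  C (BG s t) -> C (BG (x :: s) (x :: t)).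
Proof. exact: union_vertex (sgc_M1 hC). Qed.

Lemma cup_cons (Z : graph) (x : 'I_(gn Z)) s t :
  C (BG s t) -> C (BG s (x :: x :: t)).
Proof. exact: union_vertex (sgc_M2 hC). Qed.

Lemma cap_cons (Z : graph) (x : 'I_(gn Z)) s t :
  C (BG s t) -> C (BG (x :: x :: s) t).
Proof. exact: union_vertex (sgc_inv hC (sgc_M2 hC)). Qed.

Lemma strands_cat (Z : graph) (w s t : seq 'I_(gn Z)) :
  C (BG s t) -> C (BG (w ++ s) (w ++ t)).
Proof. by move=> hst; elim: w => //= x w; apply: strand_cons. Qed.

Lemma cap_inside (Z : graph) (u v : seq 'I_(gn Z)) x :
  C (BG v v) -> C (BG (u ++ x :: x :: v) (u ++ v)).
Proof. by move=> hv; elim: u => [|y u IH] /=; [apply: cap_cons | apply: strand_cons]. Qed.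

Section Unlabelled.

Variable Z : graph.
Local Notation E := (edgeless (gn Z)).
Local Notation cc := (ord_twice (gn Z)).

Lemma mem_cat_ord_twice (w : seq 'I_(gn Z)) v : v \in w ++ cc.
Proof. by rewrite mem_cat mem_ord_twice orbT. Qed.

Lemma union_edgeless (a b p q : seq 'I_(gn Z)) :
  C (BG a b) -> C (@BG E p q) -> C (BG (a ++ p) (b ++ q)).
Proof.
move=> hX hY.
have := union_into_l (X := BG a b) (Y := @BG E p q) (h := id) (@inj_id _)
  (@hom_edgeless _ _ _) hX hY.
by rewrite !map_id.
Qed.

Lemma comp_edgeless_in (u q p : seq 'I_(gn Z)) :
  C (@BG E u q) -> C (BG q p) -> (forall v, v \in q) -> C (BG u p).
Proof.
move=> hX hY cov.
have := comp_onto (X := @BG E u q) (Y := BG q p) (h := id) (@inj_id _)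
  (@hom_edgeless _ _ _) hX hY (map_id _) cov.
by rewrite map_id.
Qed.

Lemma comp_edgeless_out (p t u : seq 'I_(gn Z)) :
  C (BG p t) -> C (@BG E t u) -> (forall v, v \in t) -> C (BG p u).
Proof.
move=> hX hY cov.
have := comp_into (X := BG p t) (Y := @BG E t u) (h := id) (@inj_id _)
  (@hom_edgeless _ _ _) hX hY (map_id _) cov.
by rewrite map_id.
Qed.

Lemma comp_covering (a t a' : seq 'I_(gn Z)) :
  C (BG a t) -> C (BG t a') -> (forall v, v \in t) -> C (BG a a').
Proof.
move=> hX hY cov.
have := comp_onto (X := BG a t) (Y := BG t a') (h := id) (@inj_id _)
  (fun _ _ => id) hX hY (map_id _) cov.
by rewrite map_id.
Qed.

Lemma caps_edgeless : C (@BG E cc [::]).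
Proof. exact: (sgc_inv hC (cups_edgeless (gn Z))). Qed.

Lemma id_edgeless (w : seq 'I_(gn Z)) : C (@BG E (w ++ cc) (w ++ cc)).
Proof.
apply: strands_cat.
have := union_into_l (X := @BG E cc [::]) (Y := @BG E [::] cc) (h := id) (@inj_id _)
  (@hom_edgeless _ _ _) caps_edgeless (cups_edgeless (gn Z)).
by rewrite !map_id cats0.
Qed.

Lemma bend_input (w t : seq 'I_(gn Z)) x :
  C (BG (x :: w ++ cc) t) -> C (BG (w ++ cc) (x :: t)).
Proof.
move=> h; apply: comp_edgeless_in (@cup_cons E x _ _ (id_edgeless w)) (strand_cons x h) _.
by move=> v; rewrite !inE mem_cat_ord_twice !orbT.
Qed.

Lemma bend_inputs (w t : seq 'I_(gn Z)) :
  C (BG (w ++ cc) t) -> C (BG cc (rev w ++ t)).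
Proof.
elim: w t => [|x w IH] t //= h.
by rewrite rev_cons cat_rcons; apply/IH/bend_input.
Qed.

Lemma cancel_outputs (p a : seq 'I_(gn Z)) :
  C (BG p (rev a ++ a ++ cc)) -> C (BG p cc).
Proof.
elim: a => [|x a IH] // h; apply: IH.
move: h; rewrite rev_cons cat_rcons /= => h.
apply: comp_edgeless_out h (@cap_inside E (rev a) _ x (id_edgeless a)) _.
by move=> v; rewrite mem_cat !inE mem_cat_ord_twice !orbT.
Qed.

Lemma sgc_unlabelled (a b : seq 'I_(gn Z)) : C (BG a b) -> C (@BG Z [::] [::]).
Proof.
move=> hab.
have hab' := union_edgeless hab (id_edgeless [::]).
(* Composing with the involution turns g_a^-1 g_b into g_a^-1 g_a, which cancels
   letter by letter once all labels are bent to the output side. *)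
have haa := comp_covering hab' (sgc_inv hC hab') (@mem_cat_ord_twice _).
have hcc := cancel_outputs (bend_inputs haa).
have hc0 := comp_edgeless_out hcc caps_edgeless (@mem_cat_ord_twice [::]).
exact: comp_edgeless_out (sgc_inv hC hc0) caps_edgeless (@mem_cat_ord_twice [::]).
Qed.

End Unlabelled.
End SkewGraphCategory.

Definition edges (A : graph) : {set 'I_(gn A) * 'I_(gn A)} := [set p | gadj p.1 p.2].

Section InjectiveHoms.

Variables A B : graph.
Variable h : 'I_(gn A) -> 'I_(gn B).
Hypotheses (h_inj : injective h) (h_hom : graph_hom h).

Let h2 (p : 'I_(gn A) * 'I_(gn A)) := (h p.1, h p.2).

Let h2_inj : injective h2.
Proof. by move=> [u u'] [v v'] [/h_inj -> /h_inj ->]. Qed.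

Let h2_edges : h2 @: edges A \subset edges B.
Proof. by apply/subsetP => z /imsetP [p e ->]; rewrite !inE in e *; apply: h_hom. Qed.

Lemma card_edges_le : #|edges A| <= #|edges B|.
Proof. by rewrite -(card_imset _ h2_inj) subset_leq_card. Qed.

Lemma inj_hom_edges_onto : #|edges B| <= #|edges A| ->
  forall x y, gadj x y -> exists u u', [/\ h u = x, h u' = y & gadj u u'].
Proof.
move=> le x y e.
have onto : h2 @: edges A = edges B by apply/eqP; rewrite eqEcard h2_edges card_imset.
have : (x, y) \in h2 @: edges A by rewrite onto inE.
by case/imsetP => [[u u']]; rewrite inE => e' [-> ->]; exists u, u'.
Qed.

End InjectiveHoms.

Lemma glue_images (H K G : graph) (phi : 'I_(gn H) -> 'I_(gn G))
    (psi : 'I_(gn K) -> 'I_(gn G)) :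
  injective phi -> injective psi -> graph_hom phi -> graph_hom psi ->
  exists U fH fK, @glue H K U (fun v w => phi v == psi w) fH fK /\ subgraph U G.
Proof.
move=> iphi ipsi hphi hpsi.
(* U is the subgraph phi(H) \cup psi(K) of G, with vertices enumerated by S. *)
pose S := [set z | (z \in codom phi) || (z \in codom psi)].
pose R z z' := image_adj phi z z' || image_adj psi z z'.
have Rsym : symmetric R by move=> z z'; rewrite /R !(image_adj_sym _ z).
pose U := @Graph #|S| (fun x y => R (enum_val x) (enum_val y)) (fun x y => Rsym _ _).
have phiS v : phi v \in S by rewrite inE codom_f.
have psiS w : psi w \in S by rewrite inE codom_f orbT.
pose fH v : 'I_(gn U) := enum_rank_in (phiS v) (phi v).
pose fK w : 'I_(gn U) := enum_rank_in (psiS w) (psi w).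
have fHE v : enum_val (fH v) = phi v by rewrite enum_rankK_in.
have fKE w : enum_val (fK w) = psi w by rewrite enum_rankK_in.
have ev_inj : injective (@enum_val _ (mem S)) := enum_val_inj.
exists U, fH, fK; split; last first.
  exists enum_val; split => // x y /orP [] /image_adj_hom; apply; [exact: hphi | exact: hpsi].
apply: glueP.
- by move=> v v' /(congr1 enum_val); rewrite !fHE => /iphi.
- by move=> w w' /(congr1 enum_val); rewrite !fKE => /ipsi.
- move=> z; have := enum_valP z; rewrite inE => /orP [] /codomP [u e]; [left | right].
    by exists u; apply: ev_inj; rewrite fHE.
  by exists u; apply: ev_inj; rewrite fKE.
- by move=> v w; rewrite -fHE -fKE (inj_eq ev_inj); split => [->|/eqP].
- by move=> x y; rewrite /= /R -(image_adj_enum ev_inj fHE) -(image_adj_enum ev_inj fKE).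
Qed.

Lemma inj_hom_inv (A B : graph) (h : 'I_(gn A) -> 'I_(gn B)) (g : 'I_(gn B) -> 'I_(gn A)) :
  injective h -> graph_hom h -> injective g -> graph_hom g ->
  exists h' : 'I_(gn B) -> 'I_(gn A), [/\ cancel h h', cancel h' h & graph_hom h'].
Proof.
move=> ih hh ig hg.
have [h' hK h'K] := inj_card_bij ih (leq_card g ig).
exists h'; split => // x y e.
have [u [u' [<- <- e']]] := inj_hom_edges_onto ih hh (card_edges_le ig hg) e.
by rewrite !hK.
Qed.

Definition factor_through (H K G : graph) : Prop :=
  forall (phi : 'I_(gn H) -> 'I_(gn G)) (psi : 'I_(gn K) -> 'I_(gn G)),
    injective phi -> injective psi -> graph_hom phi -> graph_hom psi ->
    exists2 tau : 'I_(gn H) -> 'I_(gn K), graph_hom tau & forall v, phi v = psi (tau v).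

Lemma inj_homsP (K G : graph) (phi : {ffun 'I_(gn K) -> 'I_(gn G)}) :
  reflect (injective phi /\ graph_hom phi) (phi \in inj_homs K G).
Proof.
rewrite inE; apply: (iffP andP) => [[/injectiveP ip /forallP hp] | [ip hp]]; split => //.
- by move=> x y; have /forallP /(_ y) /implyP := hp x.
- exact/injectiveP.
- by apply/forallP => x; apply/forallP => y; apply/implyP/hp.
Qed.

Lemma subgraph_inj_homs (H G : graph) :
  subgraph H G -> exists psi : {ffun 'I_(gn H) -> 'I_(gn G)}, psi \in inj_homs H G.
Proof.
case=> h [ih hh]; exists [ffun x => h x].
by apply/inj_homsP; split => [x y | x y e]; rewrite !ffunE; [apply: ih | apply: hh].
Qed.

Definition comp_ffun (H K G : graph) (psi : {ffun 'I_(gn K) -> 'I_(gn G)})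
  (tau : 'I_(gn H) -> 'I_(gn K)) : {ffun 'I_(gn H) -> 'I_(gn G)} :=
  [ffun v => psi (tau v)].

Lemma map_comp_ffun (H K G : graph) psi tau (s : seq 'I_(gn H)) :
  map (@comp_ffun H K G psi tau) s = map psi (map tau s).
Proof. by rewrite -map_comp; apply: eq_map => v; rewrite ffunE. Qed.

Definition That_set (G : graph) k l (X : bgraph)
    (ji : l.-tuple 'I_(gn G) * k.-tuple 'I_(gn G)) :
  {set {ffun 'I_(gn (bgr X)) -> 'I_(gn G)}} :=
  [set phi in inj_homs (bgr X) G |
     (map phi (bin X) == val ji.2) && (map phi (bout X) == val ji.1)].

Lemma in_That_set (G : graph) k l X ji phi :
  (phi \in @That_set G k l X ji) =
  [&& phi \in inj_homs (bgr X) G, map phi (bin X) == val ji.2 & map phi (bout X) == val ji.1].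
Proof. by rewrite in_set. Qed.

Lemma ThatE (G : graph) k l X ji : That G k l X ji = (#|That_set X ji|%:R)%R.
Proof. by rewrite ffunE. Qed.

Lemma card_set_cond_sum (T : finType) (D : {set T}) (P : pred T) :
  #|[set x in D | P x]| = \sum_(x in D) P x.
Proof.
by rewrite -sum1dep_card big_mkcondr; apply: eq_bigr => x _; case: (P x).
Qed.

Lemma imset_comp_inj_homs (H K G : graph) (psi : {ffun 'I_(gn K) -> 'I_(gn G)}) :
  factor_through H K G -> psi \in inj_homs K G ->
  [set comp_ffun psi tau | tau : {ffun 'I_(gn H) -> 'I_(gn K)} in inj_homs H K] = inj_homs H G.
Proof.
move=> hf /inj_homsP [ipsi hpsi]; apply/setP => phi; apply/imsetP/inj_homsP.
  case=> tau /inj_homsP [itau htau] ->.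
  by split => [x y | x y e]; rewrite !ffunE; [move/ipsi/itau | apply/hpsi/htau].
case=> iphi hphi; have [t0 ht0 phiE] := hf phi psi iphi ipsi hphi hpsi.
exists [ffun v => t0 v]; last by apply/ffunP => v; rewrite !ffunE phiE.
apply/inj_homsP; split => [x y | x y e]; rewrite !ffunE; last exact: ht0.
by move=> e; apply: iphi; rewrite !phiE e.
Qed.

Lemma sum_card_That_set (H K G : graph) k l (c d : seq 'I_(gn H)) ji :
  factor_through H K G ->
  \sum_(tau in inj_homs H K) #|That_set (BG (map tau c) (map tau d)) ji| =
  #|inj_homs K G| * #|@That_set G k l (BG c d) ji|.
Proof.
move=> hf.
pose P (phi : {ffun 'I_(gn H) -> 'I_(gn G)}) :=
  (map phi c == val ji.2) && (map phi d == val ji.1).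
transitivity (\sum_(tau in inj_homs H K) \sum_(psi in inj_homs K G)
                P (comp_ffun psi tau) : nat).
  apply: eq_bigr => tau _; rewrite card_set_cond_sum.
  by apply: eq_bigr => psi _; rewrite /P !map_comp_ffun.
rewrite exchange_big /= -sum_nat_const; apply: eq_bigr => psi psiP.
rewrite card_set_cond_sum -(imset_comp_inj_homs hf psiP) big_imset //=.
move=> t1 t2 _ _ /ffunP e; apply/ffunP => v; have := e v; rewrite !ffunE.
by have /inj_homsP [ipsi _] := psiP; apply: ipsi.
Qed.

Lemma That_relabel (K G : graph) k l (sigma : 'I_(gn K) -> 'I_(gn K)) (a b : seq 'I_(gn K)) :
  injective sigma -> graph_hom sigma ->
  That G k l (BG (map sigma a) (map sigma b)) = That G k l (BG a b).
Proof.
move=> isg hsg; have [sg' [_ sg'K hsg']] := inj_hom_inv isg hsg isg hsg.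
pose f phi := @comp_ffun K K G phi sigma.
have f_inj : injective f.
  by move=> p1 p2 /ffunP e; apply/ffunP => v; have := e (sg' v); rewrite !ffunE sg'K.
have f_homs phi : (f phi \in inj_homs K G) = (phi \in inj_homs K G).
  apply/inj_homsP/inj_homsP => [[i h] | [i h]]; split.
  - by move=> x y e; apply: (can_inj sg'K); apply: i; rewrite !ffunE !sg'K.
  - by move=> x y /hsg'/h; rewrite !ffunE !sg'K.
  - by move=> x y; rewrite !ffunE => /i/isg.
  - by move=> x y e; rewrite !ffunE; apply/h/hsg.
apply/ffunP => ji; rewrite !ThatE -(card_preimset (@That_set G k l (BG a b) ji) f_inj).
congr (_%:R)%R.
by apply: eq_card => phi; rewrite in_That_set [RHS]in_set in_That_set f_homs !map_comp_ffun.
Qed.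

Local Open Scope ring_scope.

Lemma scale_That_sum (H K G : graph) k l (c d : seq 'I_(gn H)) :
  factor_through H K G ->
  #|inj_homs K G|%:R *: That G k l (BG c d) =
  \sum_(tau in inj_homs H K) That G k l (BG (map tau c) (map tau d)).
Proof.
move=> hf; apply/ffunP => ji; rewrite sum_ffunE !ffunE.
under eq_bigr do rewrite ThatE.
by rewrite -natr_sum (sum_card_That_set _ _ _ hf) natrM.
Qed.

Section LinSpan.

Variables (R : pzRingType) (V : lmodType R) (P : V -> Prop).

Lemma lin_span_gen v : P v -> lin_span P v.
Proof.
by move=> Pv; exists 1%N, (fun=> v), (fun=> 1); split => //; rewrite big_ord1 scale1r.
Qed.

Lemma lin_span0 : lin_span P 0.
Proof. by exists 0%N, (fun=> 0), (fun=> 0); split => [[]|]; rewrite ?big_ord0. Qed.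

Lemma lin_spanD u v : lin_span P u -> lin_span P v -> lin_span P (u + v).
Proof.
move=> [m1 [vs1 [c1 [P1 ->]]]] [m2 [vs2 [c2 [P2 ->]]]].
exists (m1 + m2)%N, (fun i => match split i with inl i1 => vs1 i1 | inr i2 => vs2 i2 end),
  (fun i => match split i with inl i1 => c1 i1 | inr i2 => c2 i2 end); split.
  by move=> i; case: (split i).
rewrite big_split_ord; congr (_ + _); apply: eq_bigr => i _.
  by rewrite (unsplitK (inl i : 'I_m1 + 'I_m2)).
by rewrite (unsplitK (inr i : 'I_m1 + 'I_m2)).
Qed.

Lemma lin_spanZ a v : lin_span P v -> lin_span P (a *: v).
Proof.
move=> [m [vs [c [Pv ->]]]]; exists m, vs, (fun i => a * c i); split => //.
by rewrite scaler_sumr; apply: eq_bigr => i _; rewrite scalerA.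
Qed.

Lemma lin_span_big (I : Type) (r : seq I) (Q : pred I) (F : I -> V) :
  (forall i, Q i -> lin_span P (F i)) -> lin_span P (\sum_(i <- r | Q i) F i).
Proof. exact: (big_ind (lin_span P) lin_span0 lin_spanD). Qed.

Lemma lin_span_sub (Q : V -> Prop) v :
  (forall w, Q w -> lin_span P w) -> lin_span Q v -> lin_span P v.
Proof.
move=> QP [m [vs [c [Qvs ->]]]].
by apply: lin_span_big => i _; apply/lin_spanZ/QP.
Qed.

End LinSpan.

Section MaximalSubgraph.

Variables (C : bgraph -> Prop) (G K : graph) (k l : nat).
Hypotheses (hC : skew_graph_category C) (K_sub : subgraph K G) (K_in_F : fib_nonempty C K).
Hypothesis K_max : forall H : graph, subgraph H G -> fib_nonempty C H -> subgraph H K.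

Lemma factor_through_maximal (H : graph) (c d : seq 'I_(gn H)) :
  C (BG c d) -> factor_through H K G.
Proof.
move=> hX phi psi iphi ipsi hphi hpsi.
have [_ [a [b [hK _]]]] := K_in_F.
have [U [fH [fK [gl UG]]]] := glue_images iphi ipsi hphi hpsi.
have ov : overlap (fun v w => phi v == psi w).
  by split=> [v w w' /eqP -> /eqP /ipsi | v v' w /eqP <- /eqP /iphi ->].
have [g [ig hg]] : subgraph U K.
  have hU := sgc_union hC hX hK ov gl.
  by apply: K_max UG _; do 3 eexists; split; first exact: hU.
have [ifH ifK _ eqv adj] := gl.
have hfH : graph_hom fH by move=> x y e; apply/adj; left; exists x, y.
have hfK : graph_hom fK by move=> x y e; apply/adj; right; exists x, y.
have [fK' [_ fK'K hfK']] := inj_hom_inv ifK hfK ig hg.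
exists (fK' \o fH) => [x y e | v]; first by apply/hfK'/hfH.
by apply/eqP/eqv; rewrite fK'K.
Qed.

Lemma That_in_span_WT (X : bgraph) : Ckl C k l X -> lin_span (WT C G K k l) (That G k l X).
Proof.
case: X => H c d [hX sc sd] /=.
have hK0 : C (@BG K [::] [::]).
  by have [_ [a [b [hK _]]]] := K_in_F; exact: (sgc_unlabelled hC hK).
have N_neq0 : #|inj_homs K G|%:R != 0 :> algC.
  by rewrite pnatr_eq0 -lt0n; apply/card_gt0P/subgraph_inj_homs.
rewrite -[That _ _ _ _]scale1r -(mulVf N_neq0) -scalerA.
rewrite (scale_That_sum _ _ _ _ (factor_through_maximal hX)).
apply/lin_spanZ/lin_span_big => tau /inj_homsP [itau htau]; apply: lin_span_gen.
exists (map tau c), (map tau d); split => //; split; rewrite ?size_map //.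
by have := union_into_r hC (X := BG c d) (Y := BG [::] [::]) itau htau hX hK0; rewrite !cats0.
Qed.

Lemma That_eq_of_hom (a b a' b' : seq 'I_(gn K)) (psi psi0 : 'I_(gn K) -> 'I_(gn G)) :
  C (BG a' b') -> injective psi -> graph_hom psi -> injective psi0 -> graph_hom psi0 ->
  map psi a' = map psi0 a -> map psi b' = map psi0 b ->
  That G k l (BG a' b') = That G k l (BG a b).
Proof.
move=> hX ipsi hpsi ipsi0 hpsi0 ea eb.
have [sg hsg sgE] := factor_through_maximal hX ipsi ipsi0 hpsi hpsi0.
have isg : injective sg by move=> x y e; apply: ipsi; rewrite !sgE e.
have map_sg s s' : map psi s = map psi0 s' -> map sg s = s'.
  move=> e; apply: (inj_map ipsi0); rewrite -e -map_comp.
  by apply: eq_map => v; rewrite /= sgE.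
by rewrite -(map_sg _ _ ea) -(map_sg _ _ eb) That_relabel.
Qed.

Lemma WT_lin_indep : lin_indep (WT C G K k l).
Proof.
move=> m vs cf ivs Pvs hsum i0.
have [psi0 psi0_inj_hom] := subgraph_inj_homs K_sub.
have /inj_homsP [ipsi0 hpsi0] := psi0_inj_hom.
have [a [b [[hab sa sb] e0]]] := Pvs i0.
have sa' : size (map psi0 a) == k by rewrite size_map sa.
have sb' : size (map psi0 b) == l by rewrite size_map sb.
pose p : l.-tuple 'I_(gn G) * k.-tuple 'I_(gn G) := (Tuple sb', Tuple sa').
have vanish j : j != i0 -> vs j p = 0.
  move=> nj; have [a' [b' [[hab' _ _] ej]]] := Pvs j.
  rewrite ej ThatE; case: (posnP #|That_set (BG a' b') p|) => [-> // | /card_gt0P [psi]].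
  rewrite in_That_set => /and3P [/inj_homsP [ipsi hpsi] /eqP ea /eqP eb].
  have := That_eq_of_hom hab' ipsi hpsi ipsi0 hpsi0 ea eb.
  by rewrite -ej -e0 => /ivs eji; rewrite eji eqxx in nj.
have := congr1 (fun f : tens (gn G) k l => f p) hsum.
rewrite sum_ffunE (bigD1 i0) //= big1 => [|j nj]; last by rewrite ffunE vanish ?scaler0.
rewrite addr0 !ffunE e0 ThatE => e.
have psi0P : psi0 \in @That_set G k l (BG a b) p.
  by apply/setIdP; split; rewrite ?eqxx.
have N_neq0 : #|@That_set G k l (BG a b) p|%:R != 0 :> algC.
  by rewrite pnatr_eq0 -lt0n; apply/card_gt0P; exists psi0.
by apply: (mulIf N_neq0); rewrite mul0r; apply: e.
Qed.

End MaximalSubgraph.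

Theorem proposition4p16 (C : bgraph -> Prop) (G K : graph) :
  skew_graph_category C ->
  subgraph K G -> fib_nonempty C K ->
  (forall H : graph, subgraph H G -> fib_nonempty C H -> subgraph H K) ->
  forall k l : nat, is_basis_of (CG C G k l) (WT C G K k l).
Proof.
move=> hC K_sub K_in_F K_max k l; split; last exact: WT_lin_indep.
move=> v; split; apply: lin_span_sub.
  by move=> _ [X [hX ->]]; apply: That_in_span_WT.
by move=> _ [a [b [hab ->]]]; apply: lin_span_gen; exists (BG a b).
Qed.
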